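(* Under the model and the scheme described in the context, for every $t\ge 1$, $\Pr(Q_t=AB)=|1-\alpha-\beta|^t$; consequently the scheme is decodable and has average normalized download cost $\ell_t/L=1+|1-\alpha-\beta|^t$ for $t\ge1$ (and $\ell_t/L=2$ for $t\le 0$), where $\ell(A)=\ell(B)=L$, $\ell(AB)=2L$ and $\ell_t=\mathbb{E}[\ell(Q_t)]$.
   Context: Model. Fix $\alpha,\beta\in[0,1]$ and a positive integer $L$. There are two sources, $A$ and $B$. At each time $t\in\mathbb{Z}$ each source $x\in\{A,B\}$ produces a message $W_{x,t}$ uniformly distributed on $\{0,1\}^L$; all messages are mutually independent. The user's requests $\{X_t\}_{t\in\mathbb{Z}}$ form a time-homogeneous Markov chain on $\{A,B\}$ with $\Pr(X_{t+1}=B\mid X_t=A)=\alpha$ and $\Pr(X_{t+1}=A\mid X_t=B)=\beta$, and $0<\Pr(X_t=A)<1$ for every $t$. The user has mutually independent local randomness $\{S_t\}_{t\in\mathbb{Z}}$, and $\{X_t\}$, $\{W_{x,t}\}$, $\{S_t\}$ are mutually independent. Decodability means the user's desired message $W_{X_t,t}$ is a function of the answer at time $t$. Scheme. Query alphabet $\{A,B,AB\}$. The answer to query $A$ is $W_{A,t}$, to $B$ is $W_{B,t}$, to $AB$ is $(W_{A,t},W_{B,t})$. For $t\le 0$, $Q_t=AB$. For $t\ge1$, $Q_t$ is generated from $(X_0,X_t,Q_{t-1})$ and fresh randomness $S_t$ (so that, given $(X_0,X_t,Q_{t-1})$, $Q_t$ is conditionally independent of all other requests and queries) as follows. If $Q_{t-1}\in\{A,B\}$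 then $Q_t=X_t$. If $Q_{t-1}=AB$, then the conditional law of $Q_t$ given $(X_0,X_t)$ is: (i) if $\alpha+\beta<1$: for $(X_0,X_t)=(A,A)$, $Q_t=A$ w.p. $\beta/(1-\alpha)$ and $Q_t=AB$ w.p. $(1-\alpha-\beta)/(1-\alpha)$; for $(A,B)$, $Q_t=B$; for $(B,A)$, $Q_t=A$; for $(B,B)$, $Q_t=B$ w.p. $\alpha/(1-\beta)$ and $Q_t=AB$ w.p. $(1-\alpha-\beta)/(1-\beta)$; (ii) if $\alpha+\beta=1$: $Q_t=X_t$; (iii) if $\alpha+\beta>1$ and $t$ even: for $(A,A)$, $Q_t=A$ w.p. $(1-\alpha)/\beta$ and $AB$ w.p. $(\alpha+\beta-1)/\beta$; for $(A,B)$, $Q_t=B$; for $(B,A)$, $Q_t=A$; for $(B,B)$, $Q_t=B$ w.p. $(1-\beta)/\alpha$ and $AB$ w.p. $(\alpha+\beta-1)/\alpha$; (iv) if $\alpha+\beta>1$ and $t$ odd: for $(A,A)$, $Q_t=A$; for $(A,B)$, $Q_t=B$ w.p. $(1-\beta)/\alpha$ and $AB$ w.p. $(\alpha+\beta-1)/\alpha$; for $(B,A)$, $Q_t=A$ w.p. $(1-\alpha)/\beta$ and $AB$ w.p. $(\alpha+\beta-1)/\beta$; for $(B,B)$, $Q_t=B$. *)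

(* finite-support probability computed by explicit path sums. *)
From Stdlib Require Import Reals List.
Import ListNotations.
Open Scope R_scope.

Inductive Src := SA | SB.
Inductive Qry := qA | qB | qAB.

Definition qry_eqb (q r : Qry) : bool :=
  match q, r with
  | qA, qA | qB, qB | qAB, qAB => true
  | _, _ => false end.

Definition qind (q r : Qry) : R := if qry_eqb q r then 1 else 0.

Definition qOf (x : Src) : Qry := match x with SA => qA | SB => qB end.

(* Markov transition  Pr(X_{t+1} = y | X_t = x) *)
Definition trans (a b : R) (x y : Src) : R :=
  match x, y with
  | SA, SA => 1 - a | SA, SB => a
  | SB, SA => b     | SB, SB => 1 - b end.

Fixpoint prA (p a b : R) (t : nat) : R :=
  match t with
  | O => p
  | S t' => prA p a b t' * (1 - a) + (1 - prA p a b t') * b end.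

Definition init (p : R) (x : Src) : R := match x with SA => p | SB => 1 - p end.

(* The scheme: conditional law Pr(Q_s = q | X_0 = x0, X_s = xs, Q_{s-1} = qp) *)
Definition kern (a b : R) (s : nat) (x0 xs : Src) (qp q : Qry) : R :=
  match qp with
  | qA | qB => qind q (qOf xs)
  | qAB =>
    match Rlt_le_dec (a + b) 1 with
    | left _ =>
      match x0, xs with
      | SA, SA => b / (1 - a) * qind q qA + (1 - a - b) / (1 - a) * qind q qAB
      | SA, SB => qind q qB
      | SB, SA => qind q qA
      | SB, SB => a / (1 - b) * qind q qB + (1 - a - b) / (1 - b) * qind q qAB
      end
    | right _ =>
      match Req_EM_T (a + b) 1 with
      | left _ => qind q (qOf xs)
      | right _ =>
        if Nat.even s then
          match x0, xs with
          | SA, SA => (1 - a) / b * qind q qA + (a + b - 1) / b * qind q qAB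
          | SA, SB => qind q qB
          | SB, SA => qind q qA
          | SB, SB => (1 - b) / a * qind q qB + (a + b - 1) / a * qind q qAB
          end
        else
          match x0, xs with
          | SA, SA => qind q qA
          | SA, SB => (1 - b) / a * qind q qB + (a + b - 1) / a * qind q qAB
          | SB, SA => (1 - a) / b * qind q qA + (a + b - 1) / b * qind q qAB
          | SB, SB => qind q qB
          end
      end
    end
  end.

Definition states : list (Src * Qry) :=
  [(SA, qA); (SA, qB); (SA, qAB); (SB, qA); (SB, qB); (SB, qAB)].

(* all sequences ((X_1,Q_1), ..., (X_t,Q_t)) *)
Fixpoint paths (t : nat) : list (list (Src * Qry)) :=
  match t with
  | O => [nil]
  | S t' => flat_map (fun st => map (cons st) (paths t')) states
  end.

(* Pr(X_1..X_t, Q_1..Q_t = path | X_0 = x0), with s the time of the head of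
   the path, xprev = X_{s-1}, qprev = Q_{s-1}. *)
Fixpoint pathWeight (a b : R) (x0 : Src) (s : nat) (xprev : Src) (qprev : Qry)
    (path : list (Src * Qry)) : R :=
  match path with
  | nil => 1
  | (x, q) :: rest =>
      trans a b xprev x * kern a b s x0 x qprev q
      * pathWeight a b x0 (S s) x q rest
  end.

Fixpoint sumR (l : list R) : R := match l with nil => 0 | r :: l' => r + sumR l' end.

(* E[ f(X_t, Q_t) ], with Q_0 = AB (as Q_t = AB for all t <= 0). *)
Definition Expect (p a b : R) (t : nat) (f : Src -> Qry -> R) : R :=
  sumR (map (fun x0 =>
    sumR (map (fun path =>
      init p x0 * pathWeight a b x0 1 x0 qAB path
      * (let '(x, q) := last path (x0, qAB) in f x q)) (paths t))) [SA; SB]).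

(* Answer to query q contains the message of source x (hence W_{x,t} is a
   function of the answer) *)
Definition decodes (x : Src) (q : Qry) : bool :=
  match q, x with
  | qAB, _ | qA, SA | qB, SB => true
  | _, _ => false end.

Definition ell (L : nat) (q : Qry) : R :=
  match q with qA | qB => INR L | qAB => 2 * INR L end.

(* Four facts follow by
   induction on the horizon n:
   - the scheme's kernel is stochastic, so the total mass is 1;
   - a single query never names the wrong source, so decoding never fails;
   - once Q leaves AB it never returns (single queries are absorbing);
   - while in AB, the chain follows a deterministic "anchor" source and keeps
     mass |1 - a - b| at every step, whence Pr(Q_t = AB) = |1 - a - b|^t.
   Since ell = L + L [Q = AB], the cost formula is a linear combination of the
   first and last facts; for t = 0 the query is AB and the cost is 2L. *)
From Stdlib Require Import Reals List Lra Lia.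
Import ListNotations.
Open Scope R_scope.

Arguments kern : simpl never.

Lemma sumR_app (l1 l2 : list R) : sumR (l1 ++ l2) = sumR l1 + sumR l2.
Proof. induction l1 as [|r l1 IH]; simpl; [ring | rewrite IH; ring]. Qed.

Lemma sumR_map_lin {A : Type} (u v : R) (h1 h2 : A -> R) (l : list A) :
  sumR (map (fun y => u * h1 y + v * h2 y) l) = u * sumR (map h1 l) + v * sumR (map h2 l).
Proof. induction l as [|y l IH]; simpl; [ring | rewrite IH; ring]. Qed.

Lemma sumR_map_scale {A : Type} (c : R) (h : A -> R) (l : list A) :
  sumR (map (fun y => c * h y) l) = c * sumR (map h l).
Proof.
  rewrite (map_ext _ (fun y => c * h y + 0 * h y)) by (intros; ring).
  rewrite sumR_map_lin; ring.
Qed.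

Lemma sumR_paths_S {A : Type} (h : list A -> R) (L : list (list A)) (sts : list A) :
  sumR (map h (flat_map (fun st => map (cons st) L) sts)) =
  sumR (map (fun st => sumR (map (fun path => h (st :: path)) L)) sts).
Proof.
  induction sts as [|st sts IH]; simpl; [reflexivity|].
  now rewrite map_app, sumR_app, IH, map_map.
Qed.

Lemma last_cons {A : Type} (l : list A) (st d : A) : last (st :: l) d = last l st.
Proof.
  revert st d; induction l as [|y l IH]; intros st d; [reflexivity|].
  change (last (y :: l) d = last (y :: l) st); now rewrite !IH.
Qed.

(* Expectation of g at the end of the next n steps, given the starting
   source x0 and the current state (xp, qp) at time s - 1. *)
Definition futureExpect (a b : R) (n s : nat) (x0 xp : Src) (qp : Qry)
    (g : Src * Qry -> R) : R :=
  sumR (map (fun path => pathWeight a b x0 s xp qp path * g (last path (xp, qp)))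
            (paths n)).
Arguments futureExpect : simpl never.

Lemma futureExpect_0 a b s x0 xp qp g : futureExpect a b 0 s x0 xp qp g = g (xp, qp).
Proof. unfold futureExpect; simpl; ring. Qed.

Lemma futureExpect_S a b n s x0 xp qp g :
  futureExpect a b (S n) s x0 xp qp g =
  sumR (map (fun st => trans a b xp (fst st) * kern a b s x0 (fst st) qp (snd st)
                       * futureExpect a b n (S s) x0 (fst st) (snd st) g) states).
Proof.
  unfold futureExpect at 1; cbn [paths]; rewrite sumR_paths_S.
  f_equal; apply map_ext; intros [x q]; unfold futureExpect; simpl fst; simpl snd.
  rewrite <- sumR_map_scale; f_equal; apply map_ext; intros path.
  cbn [pathWeight]; rewrite last_cons; ring.
Qed.

Lemma futureExpect_S_explicit a b n s x0 xp qp g :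
  futureExpect a b (S n) s x0 xp qp g =
    trans a b xp SA * kern a b s x0 SA qp qA * futureExpect a b n (S s) x0 SA qA g
  + (trans a b xp SA * kern a b s x0 SA qp qB * futureExpect a b n (S s) x0 SA qB g
  + (trans a b xp SA * kern a b s x0 SA qp qAB * futureExpect a b n (S s) x0 SA qAB g
  + (trans a b xp SB * kern a b s x0 SB qp qA * futureExpect a b n (S s) x0 SB qA g
  + (trans a b xp SB * kern a b s x0 SB qp qB * futureExpect a b n (S s) x0 SB qB g
  + (trans a b xp SB * kern a b s x0 SB qp qAB * futureExpect a b n (S s) x0 SB qAB g
  + 0))))).
Proof. rewrite futureExpect_S; reflexivity. Qed.

Lemma futureExpect_lin a b n s x0 xp qp u v g1 g2 :
  futureExpect a b n s x0 xp qp (fun z => u * g1 z + v * g2 z) =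
  u * futureExpect a b n s x0 xp qp g1 + v * futureExpect a b n s x0 xp qp g2.
Proof.
  unfold futureExpect; rewrite <- sumR_map_lin; f_equal; apply map_ext; intros; ring.
Qed.

Lemma Expect_futureExpect p a b t (f : Src -> Qry -> R) (g : Src * Qry -> R) :
  (forall x q, g (x, q) = f x q) ->
  Expect p a b t f = init p SA * futureExpect a b t 1 SA SA qAB g
                   + init p SB * futureExpect a b t 1 SB SB qAB g.
Proof.
  intros Hg; unfold Expect, futureExpect; cbn [map sumR].
  rewrite Rplus_0_r, <- !sumR_map_scale.
  f_equal; f_equal; apply map_ext; intros path; destruct (last path _); rewrite Hg; ring.
Qed.

Definition isAB (z : Src * Qry) : R := qind (snd z) qAB.
Definition undecodable (z : Src * Qry) : R := if decodes (fst z) (snd z) then 0 else 1.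

Definition other (x : Src) : Src := match x with SA => SB | SB => SA end.

Lemma kern_names_request a b s x0 x qp : kern a b s x0 x qp (qOf (other x)) = 0.
Proof.
  unfold kern; destruct qp; [destruct x; reflexivity .. |].
  destruct (Rlt_le_dec (a + b) 1); [destruct x0, x; unfold qind; simpl; ring|].
  destruct (Req_EM_T (a + b) 1); [destruct x; reflexivity|].
  destruct (Nat.even s), x0, x; unfold qind; simpl; ring.
Qed.

Lemma futureExpect_undecodable a b n s x0 xp qp :
  futureExpect a b (S n) s x0 xp qp undecodable = 0.
Proof.
  revert s xp qp; induction n as [|n IH]; intros s xp qp; rewrite futureExpect_S_explicit.
  - rewrite !futureExpect_0.
    pose proof (kern_names_request a b s x0 SA qp) as HA.
    pose proof (kern_names_request a b s x0 SB qp) as HB.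
    simpl in HA, HB; rewrite HA, HB.
    unfold undecodable; simpl; ring.
  - rewrite !IH; ring.
Qed.

Lemma futureExpect_isAB_single a b n s x0 xp qp : qp <> qAB ->
  futureExpect a b n s x0 xp qp isAB = 0.
Proof.
  revert s xp qp; induction n as [|n IH]; intros s xp qp Hqp.
  - rewrite futureExpect_0; destruct qp; [reflexivity | reflexivity | congruence].
  - rewrite futureExpect_S_explicit, !(IH _ _ qA), !(IH _ _ qB) by discriminate.
    destruct qp; [| | congruence]; unfold kern, qind; simpl; ring.
Qed.

Definition stayAB (a b : R) (s : nat) (x0 xp x : Src) : R :=
  trans a b xp x * kern a b s x0 x qAB qAB.

Lemma futureExpect_isAB_geometric a b x0 (c : R) (anchor : nat -> Src) :
  (forall s, stayAB a b s x0 (anchor s) (anchor (S s)) = c) ->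
  (forall s, stayAB a b s x0 (anchor s) (other (anchor (S s))) = 0) ->
  forall n s, futureExpect a b n s x0 (anchor s) qAB isAB = c ^ n.
Proof.
  intros Hstay Hleave n; induction n as [|n IH]; intros s.
  - now rewrite futureExpect_0.
  - rewrite futureExpect_S_explicit,
      !(futureExpect_isAB_single _ _ _ _ _ _ qA), !(futureExpect_isAB_single _ _ _ _ _ _ qB)
      by discriminate.
    specialize (Hstay s); specialize (Hleave s); specialize (IH (S s)).
    unfold stayAB in *; destruct (anchor (S s)); simpl in Hleave;
      rewrite IH, Hleave, Hstay; simpl; ring.
Qed.

Section Regimes.
Variables a b : R.
Hypothesis Ha : 0 <= a <= 1.
Hypothesis Hb : 0 <= b <= 1.

Lemma kern_stochastic s x0 xs qp :
  kern a b s x0 xs qp qA + kern a b s x0 xs qp qB + kern a b s x0 xs qp qAB = 1.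
Proof.
  unfold kern; destruct qp; [destruct xs; unfold qind; simpl; ring .. |].
  destruct (Rlt_le_dec (a + b) 1).
  - destruct x0, xs; unfold qind; simpl; field; lra.
  - destruct (Req_EM_T (a + b) 1).
    + destruct xs; unfold qind; simpl; ring.
    + destruct (Nat.even s), x0, xs; unfold qind; simpl; field; lra.
Qed.

Lemma futureExpect_one n s x0 xp qp : futureExpect a b n s x0 xp qp (fun _ => 1) = 1.
Proof.
  revert s xp qp; induction n as [|n IH]; intros s xp qp.
  - apply futureExpect_0.
  - rewrite futureExpect_S_explicit, !IH.
    set (mass x := kern a b s x0 x qp qA + kern a b s x0 x qp qB + kern a b s x0 x qp qAB).
    transitivity (trans a b xp SA * mass SA + trans a b xp SB * mass SB); [unfold mass; ring|].
    unfold mass; rewrite !kern_stochastic; destruct xp; simpl; ring.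
Qed.

(* In each regime of the scheme, the AB mass decays by |1 - a - b| per step:
   for a + b <= 1 the anchor is X_0 itself (for a + b = 1 the AB mass is 0
   from the first step on); for a + b > 1 it alternates, being X_0 at odd
   times and the other source at even times. *)
Lemma futureExpect_isAB n x0 :
  futureExpect a b n 1 x0 x0 qAB isAB = Rabs (1 - a - b) ^ n.
Proof.
  destruct (Rlt_le_dec (a + b) 1) as [Hlt | Hge].
  - rewrite Rabs_right by lra.
    apply (futureExpect_isAB_geometric a b x0 _ (fun _ => x0)); intros s;
      unfold stayAB, kern; destruct (Rlt_le_dec (a + b) 1); try lra;
      destruct x0; unfold qind; simpl; field; lra.
  - destruct (Req_EM_T (a + b) 1) as [Heq | Hne].
    + replace (1 - a - b) with 0 by lra; rewrite Rabs_R0.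
      apply (futureExpect_isAB_geometric a b x0 _ (fun _ => x0)); intros s;
        unfold stayAB, kern; destruct (Rlt_le_dec (a + b) 1); try lra;
        destruct (Req_EM_T (a + b) 1); try lra; destruct x0; unfold qind; simpl; ring.
    + rewrite Rabs_left by lra.
      set (anchor := fun s => if Nat.even s then other x0 else x0).
      change x0 with (anchor 1%nat) at 2.
      apply futureExpect_isAB_geometric; intros s;
        unfold anchor, stayAB, kern; rewrite Nat.even_succ, <- Nat.negb_even;
        destruct (Rlt_le_dec (a + b) 1); try lra;
        destruct (Req_EM_T (a + b) 1); try lra;
        destruct (Nat.even s), x0; unfold qind; simpl; field; lra.
Qed.
End Regimes.

Theorem mainTheorem2 (p a b : R) (L : nat) :
  0 <= a <= 1 -> 0 <= b <= 1 -> (0 < L)%nat ->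
  (forall t : nat, 0 < prA p a b t < 1) ->
  (forall t : nat, (1 <= t)%nat ->
     Expect p a b t (fun _ q => qind q qAB) = Rabs (1 - a - b) ^ t
     /\ Expect p a b t (fun x q => if decodes x q then 0 else 1) = 0
     /\ Expect p a b t (fun _ q => ell L q) / INR L = 1 + Rabs (1 - a - b) ^ t)
  /\ Expect p a b 0 (fun _ q => ell L q) / INR L = 2.
Proof.
  intros Ha Hb HL _.
  assert (HL0 : INR L <> 0) by (apply not_0_INR; lia).
  set (cost := fun z => INR L * (fun _ : Src * Qry => 1) z + INR L * isAB z).
  assert (Hcost : forall x q, cost (x, q) = ell L q)
    by (intros x [| |]; unfold cost, isAB, qind; simpl; ring).
  split.
  - intros t Ht; split; [|split].
    + rewrite (Expect_futureExpect _ _ _ _ _ isAB) by reflexivity.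
      rewrite !futureExpect_isAB by assumption; unfold init; ring.
    + rewrite (Expect_futureExpect _ _ _ _ _ undecodable) by reflexivity.
      destruct t as [|t]; [lia|].
      rewrite !futureExpect_undecodable; ring.
    + rewrite (Expect_futureExpect _ _ _ _ _ cost Hcost); unfold cost.
      rewrite !futureExpect_lin, !futureExpect_one, !futureExpect_isAB by assumption.
      unfold init; field; exact HL0.
  - unfold Expect; simpl; field; exact HL0.
Qed.
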